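(* Let $\{\emptyset,\Omega\}=\mathcal{F}_0\subseteq\cdots\subseteq\mathcal{F}_n$ be $\sigma$-fields on a probability space and let $(\xi_i,\mathcal{F}_i)_{i=1,\dots,n}$ be square-integrable supermartingale differences (each $\xi_i$ is $\mathcal{F}_i$-measurable with $\mathbf{E}\xi_i^2<\infty$ and $\mathbf{E}(\xi_i\mid\mathcal{F}_{i-1})\le0$). Then for all $y\ge0$, all $\lambda>0$ and each $i$, \[ \mathbf{E}\left(\exp\left\{\lambda\xi_i-\tfrac12(\lambda\xi_i)^2\mathbf{1}_{\{\xi_i>y\}}\right\}\,\Big|\,\mathcal{F}_{i-1}\right)\le\exp\left\{\left(\frac{e^{\lambda y}-1-\lambda y}{y^2}\right)\mathbf{E}\big(\xi_i^2\mathbf{1}_{\{\xi_i\le y\}}\mid\mathcal{F}_{i-1}\big)\right\}, \] where by convention $\frac{e^{\lambda y}-1-\lambda y}{y^2}=\frac{\lambda^2}{2}$ when $y=0$. *)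

From HB Require Import structures.
From mathcomp Require Import all_boot all_order all_algebra.
From mathcomp Require Import all_classical all_reals all_analysis.
Set Implicit Arguments. Unset Strict Implicit. Unset Printing Implicit Defensive.
Import Order.TTheory GRing.Theory Num.Theory.
Local Open Scope classical_set_scope.
Local Open Scope ring_scope.

Definition sub_sigma_field d (T : measurableType d) (G : set (set T)) :=
  sigma_algebra setT G /\ (forall A, G A -> measurable A).

Definition G_measurable d (T : measurableType d) (R : realType)
    (G : set (set T)) (Z : T -> R) :=
  forall B : set R, measurable B -> G (Z @^-1` B).

Definition cond_exp_version d (T : measurableType d) (R : realType)
    (P : probability T R) (G : set (set T)) (X Z : T -> R) :=
  [/\ G_measurable G Z,
      P.-integrable setT (EFin \o Z) &
      forall A, G A -> (\int[P]_(x in A) (Z x)%:E = \int[P]_(x in A) (X x)%:E)%E].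

Definition coef (R : realType) (lambda y : R) : R :=
  if y == 0 then lambda ^+ 2 / 2
  else (expR (lambda * y) - 1 - lambda * y) / y ^+ 2.

From HB Require Import structures.
From mathcomp Require Import all_boot all_order all_algebra.
From mathcomp Require Import all_classical all_reals all_analysis.
From mathcomp Require Import measurable_realfun ring lra.
Set Implicit Arguments. Unset Strict Implicit. Unset Printing Implicit Defensive.
Import Order.TTheory GRing.Theory Num.Theory.
Local Open Scope classical_set_scope.
Local Open Scope ring_scope.

(* With u := lambda * x, the integrand exp (u - u^2/2 [x > y]) is bounded
   pointwise by 1 + u + coef lambda y * x^2 [x <= y]: on {x > y} because
   exp (u - u^2/2) <= 1 + u for u >= 0, and on {x <= y} because
   v |-> (e^v - 1 - v)/v^2 is nondecreasing, so its value at lambda * x is at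
   most its value at lambda * y.  Conditional expectation is monotone and
   affine, so the left-hand side is at most
   1 + lambda E(xi | F_{i-1}) + coef lambda y * E(xi^2 [xi <= y] | F_{i-1});
   the supermartingale property removes the middle term and 1 + t <= e^t
   concludes. *)

Section expR_bounds.
Variable R : realType.
Implicit Types s t u : R.

Lemma series_exp_coeff_le_expR u N : 0 <= u -> series (exp_coeff u) N <= expR u.
Proof.
move=> u0; apply: nondecreasing_cvgn_le; last exact: is_cvg_series_exp_coeff.
move=> m n mn; rewrite /series /= (big_cat_nat (leq0n m) mn) /= lerDl.
by apply: sumr_ge0 => k _; exact: exp_coeff_ge0.
Qed.

Lemma series_exp_coeffE u N : (2 <= N)%N ->
  series (exp_coeff u) N = 1 + u + \sum_(2 <= k < N) exp_coeff u k.
Proof.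
move=> N2; rewrite /series /= big_ltn ?(leq_trans _ N2)// big_ltn//.
by rewrite /exp_coeff /= expr0 expr1 !divr1 addrA.
Qed.

Lemma series_exp_coeff3 u : series (exp_coeff u) 3 = 1 + u + u ^+ 2 / 2.
Proof. by rewrite series_exp_coeffE// big_nat1 /exp_coeff /=. Qed.

Lemma series_exp_coeff4 u :
  series (exp_coeff u) 4 = 1 + u + u ^+ 2 / 2 + u ^+ 3 / 6.
Proof.
rewrite series_exp_coeffE// big_nat_recr// big_nat1 /exp_coeff /= addrA.
by rewrite !factS fact0.
Qed.

Lemma expR_ge1DxDsqr s : 0 <= s -> 1 + s + s ^+ 2 / 2 <= expR s.
Proof. by move=> s0; rewrite -series_exp_coeff3 series_exp_coeff_le_expR. Qed.

Lemma expR_le1DxDsqr t : t <= 0 -> expR t <= 1 + t + t ^+ 2 / 2.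
Proof.
move=> t0; set u := - t; have u0 : 0 <= u by rewrite oppr_ge0.
have -> : t = - u by rewrite opprK.
have hu := series_exp_coeff_le_expR 4 u0; rewrite series_exp_coeff4 in hu.
have p_gt0 : 0 < 1 - u + u ^+ 2 / 2 by nra.
rewrite sqrrN expRN -div1r ler_pdivrMr ?expR_gt0//.
apply: le_trans (ler_wpM2l (ltW p_gt0) hu); rewrite -subr_ge0.
have -> : (1 - u + u ^+ 2 / 2) * (1 + u + u ^+ 2 / 2 + u ^+ 3 / 6) - 1
  = u ^+ 3 * (2 + u + u ^+ 2) / 12 by field.
by rewrite !mulr_ge0 ?invr_ge0 ?ler0n ?exprn_ge0 ?addr_ge0 ?sqr_ge0.
Qed.

(* (1 + v) * expR (v^2/2 - v) is nondecreasing and equals 1 at v = 0. *)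
Lemma is_derive_1DxexpR u :
  is_derive u 1 (fun v : R => (1 + v) * expR (2^-1 * v ^+ 2 - v))
    (u ^+ 2 * expR (2^-1 * u ^+ 2 - u)).
Proof.
have hD := is_deriveD (is_derive_cst (1 : R) u 1) (is_derive_id u 1).
have hE := is_derive1_comp (is_derive_expR _)
  (is_deriveB (is_deriveZ 2^-1 (is_deriveX 2 (is_derive_id u 1))) (is_derive_id u 1)).
have hM := is_deriveM hD hE; set F := (_ * _) in hM.
rewrite (_ : (fun v => _) = F); last exact/funext.
apply: (is_derive_eq hM).
rewrite /GRing.scale /= /GRing.scale /=.
set E := expR _; rewrite -[(cst 1 + id) u]/(1 + u).
by field.
Qed.

Lemma expR_sub_halfsqr_le1D t : 0 <= t -> expR (t - 2^-1 * t ^+ 2) <= 1 + t.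
Proof.
rewrite le_eqVlt => /predU1P[<-|t0]; first by rewrite expr0n mulr0 subr0 expR0 addr0.
have [|c _] := MVT t0 (fun x _ => is_derive_1DxexpR x).
  by apply: derivable_within_continuous => r _; have [] := is_derive_1DxexpR r.
rewrite expr0n /= mulr0 subr0 expR0 addr0 mulr1 subr0 => /eqP.
rewrite subr_eq => /eqP hE.
have : 1 <= (1 + t) * expR (2^-1 * t ^+ 2 - t).
  by rewrite hE lerDr (mulr_ge0 (mulr_ge0 (sqr_ge0 _) (expR_ge0 _)) (ltW t0)).
rewrite -ler_pdivrMr ?expR_gt0// -expRN mul1r.
by rewrite (_ : - _ = t - 2^-1 * t ^+ 2); last ring.
Qed.

(* Cross-multiplied monotonicity of u |-> (expR u - 1 - u) / u ^+ 2. *)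
Lemma expR_remainder_ratio_le_nonneg t s : 0 <= t -> t <= s ->
  s ^+ 2 * (expR t - 1 - t) <= t ^+ 2 * (expR s - 1 - s).
Proof.
move=> t0 ts; have s0 : 0 <= s := le_trans t0 ts.
have cvg_rem u v : (fun N => v ^+ 2 * (series (exp_coeff u) N - 1 - u)) @ \oo -->
    (v ^+ 2 * (expR u - 1 - u) : R^o).
  apply: cvgMl_tmp; apply: cvgB; last exact: cvg_cst.
  by apply: cvgB; [exact: is_cvg_series_exp_coeff|exact: cvg_cst].
apply: (ler_cvg_to (cvg_rem t s) (cvg_rem s t)); near=> N.
have N2 : (2 <= N)%N by near: N; exact: nbhs_infty_ge.
have rem u : series (exp_coeff u) N - 1 - u = \sum_(2 <= k < N) exp_coeff u k.
  by rewrite series_exp_coeffE//; ring.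
rewrite !rem !mulr_sumr.
apply: ler_sum_nat => k /andP[k2 _]; rewrite /exp_coeff /= -(subnK k2) !exprD !mulrA.
rewrite ler_wpM2r ?invr_ge0 ?ler0n//.
have tks : t ^+ (k - 2) <= s ^+ (k - 2) by rewrite lerXn2r ?nnegrE.
have st0 : 0 <= s ^+ 2 * t ^+ 2 by rewrite mulr_ge0 ?exprn_ge0.
rewrite (_ : _ * t * t = s ^+ 2 * t ^+ 2 * t ^+ (k - 2)); last ring.
by rewrite (_ : _ * s * s = s ^+ 2 * t ^+ 2 * s ^+ (k - 2)) ?ler_wpM2l//; ring.
Unshelve. all: by end_near. Qed.

Lemma expR_remainder_ratio_le t s : 0 < s -> t <= s ->
  s ^+ 2 * (expR t - 1 - t) <= t ^+ 2 * (expR s - 1 - s).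
Proof.
move=> s0 ts; have [t0|t0] := leP 0 t; first exact: expR_remainder_ratio_le_nonneg.
have ht := expR_le1DxDsqr (ltW t0); have hs := expR_ge1DxDsqr (ltW s0).
have s2 := sqr_ge0 s; have t2 := sqr_ge0 t.
apply: (@le_trans _ _ (s ^+ 2 * (t ^+ 2 / 2))); first by rewrite ler_wpM2l//; lra.
by rewrite mulrCA ler_wpM2l//; lra.
Qed.

Lemma expR_truncated_le_coef (lam y x : R) : 0 <= y -> 0 < lam ->
  expR (lam * x - 2^-1 * (lam * x) ^+ 2 * ((y < x)%R : bool)%:R)
    <= 1 + lam * x + coef lam y * (x ^+ 2 * ((x <= y)%R : bool)%:R).
Proof.
move=> y0 lam0; have [xy|yx] := leP x y; last first.
  rewrite mulr1 mulr0 mulr0 addr0; apply: expR_sub_halfsqr_le1D.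
  by rewrite mulr_ge0 ?ltW// (le_lt_trans y0).
rewrite mulr0 subr0 mulr1 /coef; have [y00|y_neq0] := eqVneq y 0.
  have := @expR_le1DxDsqr (lam * x); subst y; nra.
set B := expR (lam * y) - 1 - lam * y.
have ly_gt0 : 0 < lam * y by rewrite mulr_gt0// lt_def y_neq0.
suff : (lam * y) ^+ 2 * (expR (lam * x) - 1 - lam * x)
    <= (lam * y) ^+ 2 * (B / y ^+ 2 * x ^+ 2) by rewrite ler_pM2l ?exprn_gt0//; lra.
rewrite (_ : _ * (B / _ * _) = (lam * x) ^+ 2 * B); last by field.
by apply: expR_remainder_ratio_le; rewrite // ler_pM2l.
Qed.

End expR_bounds.

Section measure_lemmas.
Context d (T : measurableType d) (R : realType).

Lemma measure0_integral_le0 (mu : {measure set T -> \bar R}) (A : set T)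
    (h : T -> R) (e : R) : measurable A -> measurable_fun A h -> 0 < e ->
  (forall x, A x -> e <= h x) ->
  (\int[mu]_(x in A) (h x)%:E <= 0)%E -> mu A = 0%E.
Proof.
move=> mA mh e0 eh hle; apply/eqP.
rewrite -measure_le0 -(@pmule_rle0 _ e%:E) ?lte_fin// -integral_cst//.
apply: le_trans hle; apply: ge0_le_integral => //.
- by move=> x _; rewrite lee_fin ltW.
- exact/measurable_EFinP.
Qed.

Lemma integrable_sqr_integrable (mu : {finite_measure set T -> \bar R}) (f : T -> R) :
  measurable_fun setT f -> mu.-integrable setT (EFin \o (fun x => f x ^+ 2)) ->
  mu.-integrable setT (EFin \o f).
Proof.
move=> mf intf2.
have int1 : mu.-integrable setT (EFin \o cst 1) by exact: finite_measure_integrable_cst.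
apply: le_integrable (integrableD measurableT int1 intf2) => //.
  exact/measurable_EFinP.
move=> x _ /=; rewrite lee_fin (ger0_norm (addr_ge0 ler01 (sqr_ge0 _))).
by rewrite ler_norml; apply/andP; split; nra.
Qed.

Lemma integrable_mul_indic (mu : {measure set T -> \bar R}) (A : set T) (f : T -> R) :
  measurable A -> mu.-integrable setT (EFin \o f) ->
  mu.-integrable setT (EFin \o (fun x => f x * \1_A x)).
Proof.
move=> mA intf; have /integrableP[/measurable_EFinP mf _] := intf.
apply: le_integrable intf => //.
  by apply/measurable_EFinP; apply: measurable_funM => //; exact: measurable_indic.
move=> x _ /=; rewrite lee_fin indicE normrM.
by case: (_ \in _); rewrite ?normr1 ?normr0 ?mulr1 ?mulr0.
Qed.

Lemma integrable_affine (mu : {finite_measure set T -> \bar R}) (A : set T)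
    (a b : R) (f g : T -> R) : measurable A ->
  mu.-integrable A (EFin \o f) -> mu.-integrable A (EFin \o g) ->
  mu.-integrable A (fun x => (1 + a * f x + b * g x)%:E).
Proof.
move=> mA intf intg.
have i1 : mu.-integrable A (EFin \o cst 1) by exact: finite_measure_integrable_cst.
apply: (eq_integrable mA _ _ _ (integrableD mA (integrableD mA i1
  (integrableZl mA a intf)) (integrableZl mA b intg))).
by move=> x _ /=; rewrite !EFinD !EFinM.
Qed.

Lemma integral_affine (mu : {finite_measure set T -> \bar R}) (A : set T)
    (a b : R) (f g : T -> R) : measurable A ->
  mu.-integrable A (EFin \o f) -> mu.-integrable A (EFin \o g) ->
  (\int[mu]_(x in A) (1 + a * f x + b * g x)%:E =
   mu A + a%:E * \int[mu]_(x in A) (f x)%:E + b%:E * \int[mu]_(x in A) (g x)%:E)%E.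
Proof.
move=> mA intf intg.
have i1 : mu.-integrable A (EFin \o cst 1) by exact: finite_measure_integrable_cst.
under eq_integral do rewrite !EFinD !EFinM.
rewrite integralD//; [|by apply: integrableD => //; exact: integrableZl|exact: integrableZl].
by rewrite integralD//; [rewrite integral_cst// mul1e !integralZl|exact: integrableZl].
Qed.

End measure_lemmas.

Lemma indic_setE (R : realType) (T : Type) (S : pred T) (x : T) :
  (\1_[set w | S w] x : R) = (S x)%:R.
Proof. by rewrite indicE mem_setE. Qed.

Section sub_sigma_field.
Context d (T : measurableType d) (R : realType) (G : set (set T)).
Hypothesis hG : sub_sigma_field G.

Lemma g_sigma_algebra_measurableE : G.-sigma.-measurable = G.
Proof. exact: measurable_g_measurableTypeE hG.1. Qed.

Lemma G_measurableP (f : T -> R) :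
  G_measurable G f <-> measurable_fun setT (f : g_sigma_algebraType G -> R).
Proof.
split=> [mf _ B mB|mf B mB].
  by rewrite setTI g_sigma_algebra_measurableE; exact: mf.
by rewrite -g_sigma_algebra_measurableE -[_ @^-1` _]setTI; exact: mf.
Qed.

Lemma G_measurable_measurable_fun (f : T -> R) :
  G_measurable G f -> measurable_fun setT f.
Proof. by move=> mf _ B mB; rewrite setTI; apply: hG.2; exact: mf. Qed.

Lemma ae_le_integral_le (mu : {measure set T -> \bar R}) (f g : T -> R) :
  G_measurable G f -> G_measurable G g ->
  mu.-integrable setT (EFin \o f) -> mu.-integrable setT (EFin \o g) ->
  (forall A, G A -> (\int[mu]_(x in A) (f x)%:E <= \int[mu]_(x in A) (g x)%:E)%E) ->
  {ae mu, forall x, f x <= g x}.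
Proof.
move=> mf mg intf intg hle.
pose E (j : nat) := (f \- g) @^-1` `[j.+1%:R^-1, +oo[.
have GE j : G (E j).
  have mfg : measurable_fun setT ((f \- g) : g_sigma_algebraType G -> R).
    by apply: measurable_funB; exact/G_measurableP.
  rewrite -g_sigma_algebra_measurableE -[E j]setTI.
  exact: mfg (measurable_itv _).
have mE j : measurable (E j) by exact: hG.2.
have negE : mu.-negligible (\bigcup_j E j).
  apply: negligible_bigcup => j; exists (E j); split => //.
  apply: (measure0_integral_le0 (h := f \- g) (e := j.+1%:R^-1)) => //.
  - apply: measurable_funTS; apply: measurable_funB;
      [exact: (G_measurable_measurable_fun mf)|exact: (G_measurable_measurable_fun mg)].
  - by move=> x; rewrite /E /= in_itv /= andbT.
  - have intS h : mu.-integrable setT (EFin \o h) -> mu.-integrable (E j) (EFin \o h).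
      by move=> ih; apply: integrableS ih.
    rewrite [leLHS](_ : _ = \int[mu]_(x in E j) ((EFin \o f) \- (EFin \o g)) x)%E//.
    by rewrite integralB//; [rewrite sube_le0; exact: hle|exact: intS..].
apply: negligibleS negE => x /negP; rewrite -ltNge => /ltr_add_invr[k hk].
by exists k => //; rewrite /E /= in_itv /= andbT lerBrDl ltW.
Qed.

Variable P : probability T R.

Lemma cond_exp_version_affine (a b : R) (X Y ZX ZY : T -> R) :
  P.-integrable setT (EFin \o X) -> P.-integrable setT (EFin \o Y) ->
  cond_exp_version P G X ZX -> cond_exp_version P G Y ZY ->
  cond_exp_version P G (fun x => 1 + a * X x + b * Y x)
                       (fun x => 1 + a * ZX x + b * ZY x).
Proof.
move=> intX intY [mZX intZX eX] [mZY intZY eY]; split.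
- apply/G_measurableP; apply: measurable_funD; first apply: measurable_funD.
  + exact: measurable_cst.
  + by apply: measurable_funM; [exact: measurable_cst|exact/G_measurableP].
  + by apply: measurable_funM; [exact: measurable_cst|exact/G_measurableP].
- exact: integrable_affine.
- move=> A GA; have mA := hG.2 A GA.
  have intS h : P.-integrable setT (EFin \o h) -> P.-integrable A (EFin \o h).
    by move=> ih; apply: integrableS ih.
  by rewrite !integral_affine ?eX ?eY//; exact: intS.
Qed.

Lemma cond_exp_version_le (X Y ZX ZY : T -> R) :
  cond_exp_version P G X ZX -> cond_exp_version P G Y ZY ->
  measurable_fun setT X -> measurable_fun setT Y ->
  (forall x, 0 <= X x) -> (forall x, X x <= Y x) ->
  {ae P, forall x, ZX x <= ZY x}.
Proof.
move=> [mZX intZX eX] [mZY intZY eY] mX mY X0 XY.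
apply: ae_le_integral_le mZX mZY intZX intZY _ => A GA.
have mA := hG.2 A GA; rewrite eX ?eY//.
apply: ge0_le_integral => //.
- by move=> x _; rewrite lee_fin.
- by apply/measurable_EFinP; exact: measurable_funTS.
- by apply/measurable_EFinP; exact: measurable_funTS.
- by move=> x _; rewrite lee_fin.
Qed.

End sub_sigma_field.

Theorem lemma4p1 (d : measure_display) (T : measurableType d) (R : realType)
  (P : probability T R) (n : nat) (F : nat -> set (set T)) (xi : nat -> T -> R)
  (hF : forall i, (i <= n)%N -> sub_sigma_field (F i))
  (hF0 : F 0%N = [set set0; setT])
  (hFmono : forall i, (i < n)%N -> F i `<=` F i.+1)
  (hxi_meas : forall i, (1 <= i <= n)%N -> G_measurable (F i) (xi i))
  (hxi_sq : forall i, (1 <= i <= n)%N ->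
     P.-integrable setT (EFin \o (fun x => xi i x ^+ 2)))
  (hxi_super : forall i, (1 <= i <= n)%N ->
     exists Z, cond_exp_version P (F i.-1) (xi i) Z /\ {ae P, forall x, Z x <= 0}) :
  forall (y lambda : R), 0 <= y -> 0 < lambda ->
  forall i, (1 <= i <= n)%N ->
  forall Z1 Z2 : T -> R,
    cond_exp_version P (F i.-1)
      (fun x => expR (lambda * xi i x
         - 2^-1 * (lambda * xi i x) ^+ 2 * (\1_[set w | y < xi i w] x))) Z1 ->
    cond_exp_version P (F i.-1)
      (fun x => xi i x ^+ 2 * (\1_[set w | xi i w <= y] x)) Z2 ->
    {ae P, forall x, Z1 x <= expR (coef lambda y * Z2 x)}.
Proof.
move=> y lam y0 lam0 i i1n Z1 Z2 hZ1 hZ2.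
have /andP[_ i_len] := i1n.
have hG : sub_sigma_field (F i.-1) by apply: hF; exact: leq_trans (leq_pred i) i_len.
have [Z [hZ Z_le0]] := hxi_super i i1n.
have mxi : measurable_fun setT (xi i).
  exact: (G_measurable_measurable_fun (hF i i_len) (hxi_meas i i1n)).
have mgt : measurable [set w | y < xi i w].
  by rewrite -preimage_itvoy -[_ @^-1` _]setTI; exact: mxi (measurable_itv _).
have mle : measurable [set w | xi i w <= y].
  by rewrite -preimage_itvNyc -[_ @^-1` _]setTI; exact: mxi (measurable_itv _).
have hW := cond_exp_version_affine hG lam (coef lam y)
  (integrable_sqr_integrable mxi (hxi_sq i i1n))
  (integrable_mul_indic mle (hxi_sq i i1n)) hZ hZ2.
have Z1_leW : {ae P, forall x, Z1 x <= 1 + lam * Z x + coef lam y * Z2 x}.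
  apply: (cond_exp_version_le hG hZ1 hW).
  - apply: measurableT_comp => //; apply: measurable_funB.
      by apply: measurable_funM => //; exact: measurable_cst.
    apply: measurable_funM; last exact: measurable_indic.
    apply: measurable_funM; first exact: measurable_cst.
    by apply: measurable_funX; apply: measurable_funM => //; exact: measurable_cst.
  - apply: measurable_funD; last apply: measurable_funM.
    + by apply: measurable_funD => //; exact: measurable_funM.
    + exact: measurable_cst.
    + by apply: measurable_funM; [exact: measurable_funX|exact: measurable_indic].
  - by move=> x; exact: expR_ge0.
  - by move=> x; rewrite !indic_setE; exact: expR_truncated_le_coef.
apply: filterS2 Z1_leW Z_le0 => x Z1_le Z_le0.
apply: le_trans Z1_le (le_trans _ (expR_ge1Dx _)).
have : lam * Z x <= 0 by rewrite mulr_ge0_le0 // ltW.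
lra.
Qed.
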